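(* Let $\mathcal{A}$ be a strong $T_0$-family. Then for every uncountable pairwise disjoint family $\mathcal{F}$ of finite subsets of $\omega_1$ there are distinct $A,B\in\mathcal{F}$ such that $(A\otimes B)\cap\mathcal{A}=\emptyset$, and there are distinct $A,B\in\mathcal{F}$ such that $A\otimes B\subseteq\mathcal{A}$. Moreover, every finite set $C\subseteq\omega_1$ such that $[C]^2\subseteq\mathcal{A}$ is itself an element of $\mathcal{A}$.
   Context: For disjoint sets $A,B$, $A\otimes B=\{\{\alpha,\beta\}:\alpha\in A,\beta\in B\}$; $[X]^n$ is the family of $n$-element subsets of $X$ and $[X]^{<\omega}$ the family of finite subsets. A function $c=(c_0,c_1):[\omega_1]^2\to I\times J$ with $0,1\in I$, $J\ne\emptyset$, is a $T$-coloring if for every uncountable pairwise disjoint family $\{\{a_\xi(0),a_\xi(1)\}:\xi<\omega_1\}$ of pairs of $\omega_1$ and all $(i_0,j_0),(i_1,j_1)\in I\times J$ there are $\xi<\eta<\omega_1$ with $c(\{a_\xi(0),a_\eta(0)\})=(i_0,j_0)$ and $c(\{a_\xi(1),a_\eta(1)\})=(i_1,j_1)$. It is a strong $T$-coloring if moreover for every uncountable pairwise disjoint family $\{A_\xi:\xi<\omega_1\}$ of finite subsets of $\omega_1$ there are $\xi<\eta$ with $c_0[A_\xi\otimes A_\eta]=\{0\}$ and there are $\xi<\eta$ with $c_0[A_\xi\otimes A_\eta]=\{1\}$. For such $c$, $\mathcal{A}_c=\{a\in[\omega_1]^{<\omega}:c_0[[a]^2]\subseteq\{0\}\}$; a strong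 $T_0$-family is a family of the form $\mathcal{A}_c$ for a strong $T$-coloring $c$. *)

(* omega_1 is given abstractly as a type with a strict
   well-order that is uncountable and all of whose proper initial
   segments are countable (this characterizes omega_1 up to isomorphism). *)
From Stdlib Require Import List.

Definition countable_set {X : Type} (S : X -> Prop) : Prop :=
  exists f : X -> nat, forall x y, S x -> S y -> f x = f y -> x = y.

Definition uncountable_set {X : Type} (S : X -> Prop) : Prop :=
  ~ countable_set S.

Definition finite_set {X : Type} (A : X -> Prop) : Prop :=
  exists l : list X, forall x, A x <-> In x l.

Definition is_omega1 (W : Type) (lt : W -> W -> Prop) : Prop :=
  (forall x, ~ lt x x) /\
  (forall x y z, lt x y -> lt y z -> lt x z) /\
  (forall x y, lt x y \/ x = y \/ lt y x) /\
  well_founded lt /\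
  uncountable_set (fun _ : W => True) /\
  (forall x, countable_set (fun y => lt y x)).

Definition upair {W : Type} (x y : W) : W -> Prop := fun z => z = x \/ z = y.

(* A coloring of [W]^2 is a function c : W -> W -> K that is symmetric on
   distinct arguments; c x y is the color of {x,y}. *)
Definition sym_coloring {W K : Type} (c : W -> W -> K) : Prop :=
  forall x y, x <> y -> c x y = c y x.

(* T-coloring c = (c0, c1) : [W]^2 -> I x J, with 0 = zero, 1 = one in I *)
Definition T_coloring {W I J : Type} (lt : W -> W -> Prop) (zero one : I)
  (c0 : W -> W -> I) (c1 : W -> W -> J) : Prop :=
  zero <> one /\ inhabited J /\ sym_coloring c0 /\ sym_coloring c1 /\
  forall (a0 a1 : W -> W),
    (forall xi, a0 xi <> a1 xi) ->
    (forall xi eta, xi <> eta ->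
       a0 xi <> a0 eta /\ a0 xi <> a1 eta /\
       a1 xi <> a0 eta /\ a1 xi <> a1 eta) ->
    forall (i0 i1 : I) (j0 j1 : J),
      exists xi eta, lt xi eta /\
        c0 (a0 xi) (a0 eta) = i0 /\ c1 (a0 xi) (a0 eta) = j0 /\
        c0 (a1 xi) (a1 eta) = i1 /\ c1 (a1 xi) (a1 eta) = j1.

Definition disjoint_finite_family {W : Type} (A : W -> (W -> Prop)) : Prop :=
  (forall xi, finite_set (A xi)) /\
  (forall xi, exists x, A xi x) /\
  (forall xi eta, xi <> eta -> forall x, A xi x -> A eta x -> False).

Definition strong_T_coloring {W I J : Type} (lt : W -> W -> Prop) (zero one : I)
  (c0 : W -> W -> I) (c1 : W -> W -> J) : Prop :=
  T_coloring lt zero one c0 c1 /\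
  forall A : W -> (W -> Prop), disjoint_finite_family A ->
    (exists xi eta, lt xi eta /\
       forall x y, A xi x -> A eta y -> c0 x y = zero) /\
    (exists xi eta, lt xi eta /\
       forall x y, A xi x -> A eta y -> c0 x y = one).

Definition A_c {W I : Type} (zero : I) (c0 : W -> W -> I) (a : W -> Prop) : Prop :=
  finite_set a /\ forall x y, a x -> a y -> x <> y -> c0 x y = zero.

Definition strong_T0_family {W : Type} (lt : W -> W -> Prop)
  (Afam : (W -> Prop) -> Prop) : Prop :=
  exists (I J : Type) (zero one : I) (c0 : W -> W -> I) (c1 : W -> W -> J),
    strong_T_coloring lt zero one c0 c1 /\
    forall a, Afam a <-> A_c zero c0 a.

(* Enumerate the uncountable family injectively along omega_1 by transfinite
   recursion: at stage x only countably many members have been used, so a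
   fresh one remains.  The enumerated family is an omega_1-sequence of
   pairwise disjoint finite sets, to which the strong T-property of c applies
   directly (a member that is the empty set makes both conclusions vacuous).
   For distinct points, {x, y} lies in A_c exactly when c0 x y = 0, which also
   gives the closure of A_c under sets all of whose pairs lie in A_c. *)
From Stdlib Require Import List Classical ClassicalEpsilon FunctionalExtensionality
  PropExtensionality.

Lemma countable_image {X Y : Type} (P : X -> Prop) (S : Y -> Prop) (g : X -> Y) :
  countable_set P -> (forall b, S b -> exists a, P a /\ g a = b) -> countable_set S.
Proof.
  intros [f Hf] Hcov.
  destruct (classic (inhabited X)) as [HX | HX].
  - exists (fun b => f (epsilon HX (fun a => P a /\ g a = b))).
    intros b b' Hb Hb' Hfeq.
    destruct (epsilon_spec HX _ (Hcov b Hb)) as [Pa ga].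
    destruct (epsilon_spec HX _ (Hcov b' Hb')) as [Pa' ga'].
    now rewrite <- ga, <- ga', (Hf _ _ Pa Pa' Hfeq).
  - exists (fun _ => 0); intros b b' Hb _ _.
    destruct (Hcov b Hb) as [a _]; exfalso; exact (HX (inhabits a)).
Qed.

Lemma uncountable_inhabited {X : Type} (S : X -> Prop) :
  uncountable_set S -> inhabited X.
Proof.
  intros HS; apply NNPP; intros HX; apply HS.
  exists (fun _ => 0); intros a; exfalso; exact (HX (inhabits a)).
Qed.

Lemma uncountable_exists_other {X : Type} (S : X -> Prop) (a : X) :
  uncountable_set S -> exists b, S b /\ b <> a.
Proof.
  intros HS; apply NNPP; intros Hn; apply HS.
  exists (fun _ => 0); intros b b' Hb Hb' _.
  transitivity a; [| symmetry]; apply NNPP; intros Hne; apply Hn; eauto.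
Qed.

Section Enumeration.
Variables (W X : Type) (lt : W -> W -> Prop).
Hypothesis lt_wf : well_founded lt.
Hypothesis segment_countable : forall x, countable_set (fun y => lt y x).
Variable S : X -> Prop.
Hypothesis S_uncountable : uncountable_set S.

Let X_inhabited : inhabited X := uncountable_inhabited S S_uncountable.

Definition fresh_step (x : W) (rec : forall y, lt y x -> X) : X :=
  epsilon X_inhabited (fun a => S a /\ forall y (p : lt y x), rec y p <> a).

Definition enum : W -> X := Fix lt_wf (fun _ => X) fresh_step.

Lemma enum_unfold x : enum x = fresh_step x (fun y _ => enum y).
Proof.
  apply (Fix_eq lt_wf (fun _ => X) fresh_step).
  intros x' f g Hfg; unfold fresh_step; f_equal.
  apply functional_extensionality; intros a; apply propositional_extensionality.
  split; intros [Sa Hne]; split; trivial; intros y p; [rewrite <- Hfg | rewrite Hfg]; auto.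
Qed.

Lemma enum_spec x : S (enum x) /\ forall y, lt y x -> enum y <> enum x.
Proof.
  rewrite enum_unfold; unfold fresh_step.
  apply (epsilon_spec X_inhabited (fun a => S a /\ forall y (p : lt y x), enum y <> a)).
  apply NNPP; intros Hnone; apply S_uncountable.
  apply (countable_image _ S enum (segment_countable x)).
  intros a Sa; apply NNPP; intros Hnew; apply Hnone.
  exists a; split; trivial; intros y p E; apply Hnew; eauto.
Qed.

End Enumeration.

Lemma omega1_injects_into_uncountable (W X : Type) (lt : W -> W -> Prop) (S : X -> Prop) :
  is_omega1 W lt -> uncountable_set S ->
  exists g : W -> X, (forall x, S (g x)) /\ (forall x y, x <> y -> g x <> g y).
Proof.
  intros (_ & _ & lt_total & lt_wf & _ & segment_countable) HS.
  pose proof (enum_spec W X lt lt_wf segment_countable S HS) as Henum.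
  exists (enum W X lt lt_wf S HS); split; [intros x; apply Henum |].
  intros x y Hxy; destruct (lt_total x y) as [Hlt | [E | Hlt]].
  - exact (proj2 (Henum y) x Hlt).
  - contradiction.
  - intros E; exact (proj2 (Henum x) y Hlt (eq_sym E)).
Qed.

Definition homogeneous_between {W I : Type} (c0 : W -> W -> I) (i : I)
  (A B : W -> Prop) : Prop :=
  forall x y, A x -> B y -> c0 x y = i.

Definition has_homogeneous_pair {W I : Type} (F : (W -> Prop) -> Prop)
  (c0 : W -> W -> I) (i : I) : Prop :=
  exists A B, F A /\ F B /\ A <> B /\ homogeneous_between c0 i A B.

Section HomogeneousPairs.
Variables (W I J : Type) (lt : W -> W -> Prop) (zero one : I).
Variables (c0 : W -> W -> I) (c1 : W -> W -> J).
Variable F : (W -> Prop) -> Prop.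
Hypothesis F_uncountable : uncountable_set F.

Lemma has_homogeneous_pair_of_empty_member (A0 : W -> Prop) (i : I) :
  F A0 -> (forall x, ~ A0 x) -> has_homogeneous_pair F c0 i.
Proof.
  intros FA0 A0_empty.
  destruct (uncountable_exists_other F A0 F_uncountable) as [B [FB HB]].
  exists A0, B; repeat split; auto; intros x y Hx; contradiction (A0_empty x).
Qed.

Hypothesis W_omega1 : is_omega1 W lt.
Hypothesis c_strong : strong_T_coloring lt zero one c0 c1.
Hypothesis F_finite : forall A, F A -> finite_set A.
Hypothesis F_disjoint : forall A B, F A -> F B -> A <> B -> forall x, A x -> B x -> False.

Lemma strong_T_coloring_homogeneous_pairs_nonempty :
  (forall A, F A -> exists x, A x) ->
  has_homogeneous_pair F c0 zero /\ has_homogeneous_pair F c0 one.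
Proof.
  intros F_nonempty.
  destruct (omega1_injects_into_uncountable W _ lt F W_omega1 F_uncountable)
    as [g [Fg g_inj]].
  assert (g_family : disjoint_finite_family g).
  { split; [| split]; intros xi; auto.
    intros eta Hne x; apply (F_disjoint _ _ (Fg xi) (Fg eta) (g_inj _ _ Hne)). }
  assert (lt_neq : forall xi eta, lt xi eta -> g xi <> g eta).
  { intros xi eta Hlt; apply g_inj; intros ->.
    exact (proj1 W_omega1 eta Hlt). }
  destruct (proj2 c_strong g g_family)
    as [[xi [eta [Hlt H0]]] [xi' [eta' [Hlt' H1]]]].
  split; [exists (g xi), (g eta) | exists (g xi'), (g eta')]; auto.
Qed.

Lemma strong_T_coloring_homogeneous_pairs :
  has_homogeneous_pair F c0 zero /\ has_homogeneous_pair F c0 one.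
Proof.
  destruct (classic (exists A0, F A0 /\ forall x, ~ A0 x)) as [[A0 [FA0 A0_empty]] | Hne].
  - split; exact (has_homogeneous_pair_of_empty_member A0 _ FA0 A0_empty).
  - apply strong_T_coloring_homogeneous_pairs_nonempty.
    intros A FA; apply NNPP; intros Hempty; apply Hne.
    exists A; split; trivial; intros x Ax; apply Hempty; eauto.
Qed.

End HomogeneousPairs.

Lemma A_c_upair {W I : Type} (zero : I) (c0 : W -> W -> I) (x y : W) :
  sym_coloring c0 -> x <> y -> A_c zero c0 (upair x y) <-> c0 x y = zero.
Proof.
  intros c0_sym Hxy; split.
  - intros [_ Hzero]; apply Hzero; unfold upair; auto.
  - intros Hxy0; split.
    + exists (x :: y :: nil); unfold upair; simpl; intuition.
    + unfold upair; intros u v [-> | ->] [-> | ->] Huv;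
        try congruence; rewrite c0_sym; auto.
Qed.

Lemma A_c_of_pairs {W I : Type} (zero : I) (c0 : W -> W -> I) (C : W -> Prop) :
  finite_set C ->
  (forall x y, C x -> C y -> x <> y -> A_c zero c0 (upair x y)) -> A_c zero c0 C.
Proof.
  intros C_finite Hpairs; split; trivial; intros x y Cx Cy Hxy.
  apply (Hpairs x y Cx Cy Hxy); unfold upair; auto.
Qed.

Theorem lemma2p12 (W : Type) (lt : W -> W -> Prop) (Hw1 : is_omega1 W lt)
  (Afam : (W -> Prop) -> Prop) (HA : strong_T0_family lt Afam)
  (F : (W -> Prop) -> Prop) :
  uncountable_set F ->
  (forall A, F A -> finite_set A) ->
  (forall A B, F A -> F B -> A <> B -> forall x, A x -> B x -> False) ->
  ((exists A B, F A /\ F B /\ A <> B /\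
      forall x y, A x -> B y -> ~ Afam (upair x y)) /\
   (exists A B, F A /\ F B /\ A <> B /\
      forall x y, A x -> B y -> Afam (upair x y)) /\
   (forall C : W -> Prop, finite_set C ->
      (forall x y, C x -> C y -> x <> y -> Afam (upair x y)) -> Afam C)).
Proof.
  intros F_uncountable F_finite F_disjoint.
  destruct HA as (I & J & zero & one & c0 & c1 & c_strong & Afam_A_c).
  pose proof (proj1 c_strong) as (zero_one & _ & c0_sym & _).
  assert (members_apart : forall A B x y, F A -> F B -> A <> B -> A x -> B y -> x <> y).
  { intros A B x y FA FB HAB Ax By ->; exact (F_disjoint A B FA FB HAB y Ax By). }
  destruct (strong_T_coloring_homogeneous_pairs W I J lt zero one c0 c1 F
              F_uncountable Hw1 c_strong F_finite F_disjoint)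
    as [[A [B (FA & FB & HAB & Hzero)]] [A' [B' (FA' & FB' & HAB' & Hone)]]].
  split; [| split].
  - exists A', B'; repeat split; trivial; intros x y Ax By.
    rewrite Afam_A_c, A_c_upair by eauto.
    rewrite (Hone x y Ax By); auto.
  - exists A, B; repeat split; trivial; intros x y Ax By.
    rewrite Afam_A_c, A_c_upair by eauto; auto.
  - intros C C_finite Hpairs; apply Afam_A_c, A_c_of_pairs; trivial.
    intros x y Cx Cy Hxy; apply Afam_A_c; auto.
Qed.
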